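(* Let $A\in\mathbb{R}^{m\times n}$ with $m\ge n$ and with nonzero rows $a_1^\top,\dots,a_m^\top$, let $x\in\mathbb{R}^n$ and $b:=Ax$. Fix $l\in\{1,\dots,n\}$, let $\sigma_l$ be the $l$-th largest singular value of $A$, $v_l$ an associated right singular vector, and $\eta_l:=\sigma_l^2/\|A\|_F^2$. Let $M\in[0,1]$ with $0\le M\le(1-\sqrt{\eta_l})^2$ and set $\beta=1-\frac{\eta_l}{(1-\sqrt M)^2}$, and assume $\beta\in[0,1)$. Given $x_0\in\mathbb{R}^n$ and $y_0=0$, define for $k\ge0$ $$x_{k+1}=x_k+\frac{b_{i_k}-\langle x_k,a_{i_k}\rangle}{\|a_{i_k}\|_2^2}a_{i_k}+My_k,\qquad y_{k+1}=\beta y_k+(1-\beta)(x_{k+1}-x_k),$$ with $i_0,i_1,\dots$ independent and $\mathbb{P}(i_k=i)=\|a_i\|_2^2/\|A\|_F^2$. Then for all $k\ge0$, $$\mathbb{E}\langle x_{k+1}-x,v_l\rangle=\left(1-\frac{\eta_l}{1-\sqrt M}\right)^k\left(1+\eta_l\frac{\sqrt M(k+1)-1}{1-\sqrt M}\right)\langle x_0-x,v_l\rangle .$$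
   Context: $\|\cdot\|_2$ is the Euclidean norm, $\|A\|_F$ the Frobenius norm, $b_i$ the $i$-th entry of $b$; expectation is over the random indices. *)

From HB Require Import structures.
From mathcomp Require Import all_boot all_order all_algebra.
From mathcomp Require Import reals.
Set Implicit Arguments. Unset Strict Implicit. Unset Printing Implicit Defensive.
Import Order.TTheory GRing.Theory Num.Theory.
Local Open Scope ring_scope.

Section Defs.
Variable R : realType.

Definition dotc (n : nat) (u v : 'cV[R]_n) : R := \sum_(j < n) u j 0 * v j 0.

Definition frob2 (m n : nat) (A : 'M[R]_(m, n)) : R :=
  \sum_(i < m) \sum_(j < n) A i j ^+ 2.

Definition rownorm2 (m n : nat) (A : 'M[R]_(m, n)) (i : 'I_m) : R :=
  \sum_(j < n) A i j ^+ 2.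

Definition arow (m n : nat) (A : 'M[R]_(m, n)) (i : 'I_m) : 'cV[R]_n :=
  (row i A)^T.

(* So s l is the (l+1)-th largest singular value. *)
Definition sorted_singular_values (m n : nat) (A : 'M[R]_(m, n))
    (s : 'I_n -> R) : Prop :=
  (forall j, 0 <= s j) /\
  (forall i j : 'I_n, (i <= j)%N -> s j <= s i) /\
  exists V : 'M[R]_n,
    V^T *m V = 1%:M /\ A^T *m A *m V = V *m diag_mx (\row_j (s j ^+ 2)).

Definition right_singular_vector (m n : nat) (A : 'M[R]_(m, n)) (sigma : R)
    (v : 'cV[R]_n) : Prop :=
  dotc v v = 1 /\
  exists u : 'cV[R]_m, dotc u u = 1 /\ A *m v = sigma *: u /\ A^T *m u = sigma *: v.

Definition hbrk_step (m n : nat) (A : 'M[R]_(m, n)) (b : 'cV[R]_m) (M beta : R)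
    (st : 'cV[R]_n * 'cV[R]_n) (i : 'I_m) : 'cV[R]_n * 'cV[R]_n :=
  let: (xk, yk) := st in
  let xk1 := xk + ((b i 0 - dotc xk (arow A i)) / rownorm2 A i) *: arow A i
             + M *: yk in
  (xk1, beta *: yk + (1 - beta) *: (xk1 - xk)).

Definition hbrk_run (m n : nat) (A : 'M[R]_(m, n)) (b : 'cV[R]_m) (M beta : R)
    (x0 : 'cV[R]_n) (s : seq 'I_m) : 'cV[R]_n * 'cV[R]_n :=
  foldl (hbrk_step A b M beta) (x0, 0) s.

Definition rowprob (m n : nat) (A : 'M[R]_(m, n)) (i : 'I_m) : R :=
  rownorm2 A i / frob2 A.

(* E < x_{k+1} - x, v >, the expectation over independent i_0, ..., i_k
   (each with law rowprob), written as the finite sum over all outcomes. *)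
Definition expected_err_proj (m n : nat) (A : 'M[R]_(m, n)) (b : 'cV[R]_m)
    (M beta : R) (x0 x v : 'cV[R]_n) (k : nat) : R :=
  \sum_(t : {ffun 'I_k.+1 -> 'I_m})
     (\prod_(j < k.+1) rowprob A (t j)) *
     dotc ((hbrk_run A b M beta x0 (codom t)).1 - x) v.

End Defs.

(* Conditionally on i_0, ..., i_{k-1}, the Kaczmarz projection onto the row
   a_i, averaged with weights ||a_i||^2 / ||A||_F^2, acts on <., v> as
   multiplication by 1 - eta, because A^T A v = sigma^2 v.  Hence the
   expectations e_k = E <x_k - x, v> and f_k = E <y_k, v> obey a linear
   2 x 2 recurrence.  For the prescribed beta its matrix has trace 2 q and
   determinant q^2 with q = 1 - eta / (1 - sqrt M), so e_k solves the
   double-root recurrence e_{k+2} = 2 q e_{k+1} - q^2 e_k, whose solution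
   from e_0 = <x_0 - x, v> and e_1 = (1 - eta) e_0 is the stated formula. *)

From mathcomp Require Import all_boot all_order all_algebra.
From mathcomp Require Import reals.
From mathcomp Require Import ring.
Set Implicit Arguments. Unset Strict Implicit. Unset Printing Implicit Defensive.
Import Order.TTheory GRing.Theory Num.Theory.
Local Open Scope ring_scope.

Section IidMean.
Variables (R : realType) (T : finType) (p : T -> R).

Definition iid_mean k (g : seq T -> R) : R :=
  \sum_(t : {ffun 'I_k -> T}) (\prod_(j < k) p (t j)) * g (codom t).

Definition ffun_rcons k (fi : {ffun 'I_k -> T} * T) : {ffun 'I_k.+1 -> T} :=
  [ffun j => if unlift ord_max j is Some j' then fi.1 j' else fi.2].

Lemma widen_ord_lift_max k (j : 'I_k) : widen_ord (leqnSn k) j = lift ord_max j.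
Proof. by apply: val_inj; rewrite /= /bump leqNgt ltn_ord. Qed.

Lemma ffun_rcons_widen k fi (j : 'I_k) :
  ffun_rcons fi (widen_ord (leqnSn k) j) = fi.1 j.
Proof. by rewrite ffunE widen_ord_lift_max liftK. Qed.

Lemma ffun_rcons_max k fi : @ffun_rcons k fi ord_max = fi.2.
Proof. by rewrite ffunE unlift_none. Qed.

Lemma codom_ffun_rcons k fi : codom (@ffun_rcons k fi) = rcons (codom fi.1) fi.2.
Proof.
rewrite !codomE enum_ordSr map_rcons ffun_rcons_max -map_comp; congr rcons.
by apply: eq_map => j /=; rewrite ffun_rcons_widen.
Qed.

Lemma bij_ffun_rcons k : bijective (@ffun_rcons k).
Proof.
exists (fun t : {ffun 'I_k.+1 -> T} =>
  ([ffun j => t (widen_ord (leqnSn k) j)], t ord_max)).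
  move=> [f i]; rewrite ffun_rcons_max; congr pair.
  by apply/ffunP => j; rewrite ffunE ffun_rcons_widen.
move=> t; apply/ffunP => j; rewrite ffunE.
by case: unliftP => [j' ->|->] //=; rewrite ffunE widen_ord_lift_max.
Qed.

Lemma iid_mean0 g : iid_mean 0 g = g [::].
Proof.
rewrite /iid_mean (eq_bigr (fun _ => g [::])); last first.
  by move=> t _; rewrite big_ord0 mul1r codomE enum_ord0.
by rewrite sumr_const card_ffun card_ord expn0 mulr1n.
Qed.

Lemma iid_meanS k g :
  iid_mean k.+1 g = iid_mean k (fun s => \sum_i p i * g (rcons s i)).
Proof.
rewrite /iid_mean (reindex (@ffun_rcons k)) /=; last first.
  exact/onW_bij/bij_ffun_rcons.
rewrite -(pair_big xpredT xpredT (fun f i =>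
  (\prod_(j < k.+1) p (ffun_rcons (f, i) j)) * g (codom (ffun_rcons (f, i))))).
apply: eq_bigr => f _; rewrite mulr_sumr; apply: eq_bigr => i _.
rewrite big_ord_recr /= ffun_rcons_max codom_ffun_rcons.
under eq_bigr do rewrite ffun_rcons_widen.
by rewrite -mulrA mulrCA.
Qed.

Lemma iid_mean_lin k a b g h :
  iid_mean k (fun s => a * g s + b * h s) = a * iid_mean k g + b * iid_mean k h.
Proof. by rewrite /iid_mean !mulr_sumr -big_split /=; apply: eq_bigr => t _; ring. Qed.

Lemma eq_iid_mean k (g h : seq T -> R) : g =1 h -> iid_mean k g = iid_mean k h.
Proof. by move=> gh; apply: eq_bigr => t _; rewrite gh. Qed.

End IidMean.

Section DoubleRootRecurrence.
Variables (R : comPzRingType) (a : nat -> R) (q : R).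
Hypothesis a_rec : forall k, a k.+2 = 2 * q * a k.+1 - q ^+ 2 * a k.

Lemma double_root_recurrence k :
  a k.+1 = q ^+ k * (k.+1%:R * a 1%N - k%:R * q * a 0%N).
Proof.
suff: a k.+1 = q ^+ k * (k.+1%:R * a 1%N - k%:R * q * a 0%N) /\
      a k.+2 = q ^+ k.+1 * (k.+2%:R * a 1%N - k.+1%:R * q * a 0%N) by case.
elim: k => [|k [IH1 IH2]]; first by split; [ring | rewrite a_rec; ring].
split=> //; rewrite a_rec IH1 IH2 !exprS !mulrSr; ring.
Qed.

End DoubleRootRecurrence.

(* Cayley-Hamilton for the 2 x 2 matrix [[al, be], [ga, de]]. *)
Lemma coupled_recurrence_trace_det (R : comPzRingType) (a b : nat -> R)
    (al be ga de : R) :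
  (forall k, a k.+1 = al * a k + be * b k) ->
  (forall k, b k.+1 = ga * a k + de * b k) ->
  forall k, a k.+2 = (al + de) * a k.+1 - (al * de - be * ga) * a k.
Proof. by move=> ha hb k; rewrite !ha hb; ring. Qed.

Section Dotc.
Variable R : realType.

Lemma dotcDl n (u w v : 'cV[R]_n) : dotc (u + w) v = dotc u v + dotc w v.
Proof. by rewrite /dotc -big_split; apply: eq_bigr => j _; rewrite mxE mulrDl. Qed.

Lemma dotcZl n a (u v : 'cV[R]_n) : dotc (a *: u) v = a * dotc u v.
Proof. by rewrite /dotc mulr_sumr; apply: eq_bigr => j _; rewrite mxE mulrA. Qed.

Lemma dotcNl n (u v : 'cV[R]_n) : dotc (- u) v = - dotc u v.
Proof. by rewrite -scaleN1r dotcZl mulN1r. Qed.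

Lemma dotc0l n (v : 'cV[R]_n) : dotc 0 v = 0.
Proof. by rewrite -(scale0r 0) dotcZl mul0r. Qed.

Lemma dotcZr n a (u v : 'cV[R]_n) : dotc u (a *: v) = a * dotc u v.
Proof. by rewrite /dotc mulr_sumr; apply: eq_bigr => j _; rewrite mxE mulrCA. Qed.

Lemma dotc_arowl m n (A : 'M[R]_(m, n)) i v : dotc (arow A i) v = (A *m v) i 0.
Proof. by rewrite mxE; apply: eq_bigr => j _; rewrite !mxE. Qed.

Lemma dotc_arowr m n (A : 'M[R]_(m, n)) i u : dotc u (arow A i) = (A *m u) i 0.
Proof. by rewrite mxE; apply: eq_bigr => j _; rewrite !mxE mulrC. Qed.

Lemma dotc_trmx_mul m n (A : 'M[R]_(m, n)) (u : 'cV[R]_n) (w : 'cV[R]_m) :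
  \sum_i dotc u (arow A i) * w i 0 = dotc u (A^T *m w).
Proof.
rewrite /dotc; under eq_bigr do rewrite mulr_suml.
rewrite exchange_big; apply: eq_bigr => j _ /=.
by rewrite mxE mulr_sumr; apply: eq_bigr => i _; rewrite !mxE mulrA.
Qed.

End Dotc.

Section RowSampling.
Variables (R : realType) (m n : nat) (A : 'M[R]_(m, n)).
Hypothesis rowsA : forall i, row i A != 0.

Lemma rownorm2_neq0 i : rownorm2 A i != 0.
Proof.
apply: contra (rowsA i) => /eqP A_i0; apply/eqP/rowP => j; rewrite !mxE.
have /eqP := psumr_eq0P (fun j _ => sqr_ge0 (A i j)) A_i0 (isT : xpredT j).
by rewrite sqrf_eq0 => /eqP.
Qed.

Lemma frob2_neq0 : (0 < m)%N -> frob2 A != 0.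
Proof.
move=> m_gt0; apply/eqP => frob0; move: (rownorm2_neq0 (Ordinal m_gt0)).
have rownorm2_ge0 i : 0 <= rownorm2 A i by apply: sumr_ge0 => j _; apply: sqr_ge0.
by rewrite (psumr_eq0P (fun i _ => rownorm2_ge0 i) frob0) ?eqxx.
Qed.

Lemma sum_rowprob : frob2 A != 0 -> \sum_i rowprob A i = 1.
Proof. by move=> frobA; rewrite -mulr_suml divff. Qed.

Lemma sum_rowprob_const c : frob2 A != 0 -> \sum_i rowprob A i * c = c.
Proof. by move=> frobA; rewrite -mulr_suml sum_rowprob ?mul1r. Qed.

Lemma mean_row_projection (u w : 'cV[R]_n) :
  \sum_i rowprob A i * (dotc u (arow A i) / rownorm2 A i * dotc (arow A i) w)
  = dotc u (A^T *m (A *m w)) / frob2 A.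
Proof.
rewrite -dotc_trmx_mul mulr_suml; apply: eq_bigr => i _.
rewrite /rowprob dotc_arowl.
set c := dotc u _; set d := _ i 0; set r := rownorm2 A i.
transitivity (c * d / frob2 A * (r / r)); first by ring.
by rewrite divff ?mulr1 // rownorm2_neq0.
Qed.

End RowSampling.

Section HeavyBallStep.
Variables (R : realType) (m n : nat) (A : 'M[R]_(m, n)) (x v : 'cV[R]_n).
Variables (M beta sigma : R).
Hypotheses (rowsA : forall i, row i A != 0) (frobA : frob2 A != 0).
Hypothesis eigen_v : A^T *m (A *m v) = sigma ^+ 2 *: v.

Let eta := sigma ^+ 2 / frob2 A.
Let step := hbrk_step A (A *m x) M beta.

Lemma hbrk_step_err st i :
  dotc ((step st i).1 - x) v =
  dotc (st.1 - x) v - dotc (st.1 - x) (arow A i) / rownorm2 A i * dotc (arow A i) v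
  + M * dotc st.2 v.
Proof.
case: st => xk yk; rewrite /step /hbrk_step /= -dotc_arowr.
by rewrite !(dotcDl, dotcNl, dotcZl); ring.
Qed.

Lemma hbrk_step_mom st i :
  dotc (step st i).2 v =
  beta * dotc st.2 v + (1 - beta) * (dotc ((step st i).1 - x) v - dotc (st.1 - x) v).
Proof.
by case: st => xk yk; rewrite /step /hbrk_step /= !(dotcDl, dotcNl, dotcZl); ring.
Qed.

Lemma mean_step_err st :
  \sum_i rowprob A i * dotc ((step st i).1 - x) v
  = (1 - eta) * dotc (st.1 - x) v + M * dotc st.2 v.
Proof.
under eq_bigr do rewrite hbrk_step_err mulrDr mulrBr.
rewrite big_split sumrB /= !sum_rowprob_const // mean_row_projection //.
by rewrite eigen_v dotcZr /eta; ring.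
Qed.

Lemma mean_step_mom st :
  \sum_i rowprob A i * dotc (step st i).2 v
  = beta * dotc st.2 v + (1 - beta) * (- eta * dotc (st.1 - x) v + M * dotc st.2 v).
Proof.
under eq_bigr do rewrite hbrk_step_mom.
transitivity (\sum_i (rowprob A i * (beta * dotc st.2 v - (1 - beta) * dotc (st.1 - x) v)
   + (1 - beta) * (rowprob A i * dotc ((step st i).1 - x) v))).
  by apply: eq_bigr => i _; ring.
by rewrite big_split /= sum_rowprob_const // -mulr_sumr mean_step_err; ring.
Qed.

End HeavyBallStep.

Lemma right_singular_vector_eigen (R : realType) m n (A : 'M[R]_(m, n)) sigma v :
  right_singular_vector A sigma v -> A^T *m (A *m v) = sigma ^+ 2 *: v.
Proof. by move=> [_ [u [_ [-> Atu]]]]; rewrite -scalemxAr Atu scalerA. Qed.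

Theorem corollary1p4 (R : realType) (m n : nat) (A : 'M[R]_(m, n))
    (x x0 : 'cV[R]_n) (l : 'I_n) (s : 'I_n -> R) (v : 'cV[R]_n) (M beta : R) :
  (n <= m)%N ->
  (forall i : 'I_m, row i A != 0) ->
  sorted_singular_values A s ->
  right_singular_vector A (s l) v ->
  let eta := s l ^+ 2 / frob2 A in
  0 <= M -> M <= 1 ->
  M <= (1 - Num.sqrt eta) ^+ 2 ->
  beta = 1 - eta / (1 - Num.sqrt M) ^+ 2 ->
  0 <= beta -> beta < 1 ->
  forall k : nat,
    expected_err_proj A (A *m x) M beta x0 x v k =
    (1 - eta / (1 - Num.sqrt M)) ^+ k *
    (1 + eta * ((Num.sqrt M * k.+1%:R - 1) / (1 - Num.sqrt M))) *
    dotc (x0 - x) v.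
Proof.
move=> le_nm rowsA _ /right_singular_vector_eigen eigen_v eta M_ge0 _ _ betaE _.
move=> beta_lt1 k.
have frobA : frob2 A != 0.
  exact/frob2_neq0/(leq_trans _ le_nm)/(leq_ltn_trans (leq0n l) (ltn_ord l)).
(* With M = 1 the junk value 0^-1 = 0 would give beta = 1. *)
have sqrtM_neq1 : 1 - Num.sqrt M != 0.
  apply: contraTneq beta_lt1 => sqrtM1.
  by rewrite betaE sqrtM1 expr0n invr0 mulr0 subr0 ltxx.
pose run := hbrk_run A (A *m x) M beta x0.
have run_rcons q i : run (rcons q i) = hbrk_step A (A *m x) M beta (run q) i.
  exact: foldl_rcons.
pose err j := iid_mean (rowprob A) j (fun q => dotc ((run q).1 - x) v).
pose mom j := iid_mean (rowprob A) j (fun q => dotc (run q).2 v).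
have errS j : err j.+1 = (1 - eta) * err j + M * mom j.
  rewrite /err /mom -iid_mean_lin iid_meanS; apply: eq_iid_mean => q.
  under eq_bigr do rewrite run_rcons.
  by rewrite (mean_step_err x M beta rowsA frobA eigen_v).
have momS j :
    mom j.+1 = - ((1 - beta) * eta) * err j + (beta + (1 - beta) * M) * mom j.
  rewrite /err /mom -iid_mean_lin iid_meanS; apply: eq_iid_mean => q.
  under eq_bigr do rewrite run_rcons.
  by rewrite (mean_step_mom x M beta rowsA frobA eigen_v) -/eta; ring.
have err_rec := coupled_recurrence_trace_det errS momS.
have -> : expected_err_proj A (A *m x) M beta x0 x v k = err k.+1 by [].
rewrite (double_root_recurrence (q := 1 - eta / (1 - Num.sqrt M))); last first.
  move=> j; rewrite err_rec -[M in LHS](sqr_sqrtr M_ge0) betaE.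
  by congr (_ * _ - _ * _); field.
by rewrite errS /err /mom !iid_mean0 /= dotc0l; field.
Qed.
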